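(* Let $G$ be a graph with $n$ vertices and let $q>0$. It is possible to delete at most $qn^2$ edges from $G$ to obtain a subgraph all of whose connected components are $q$-cut-dense.
   Context: A graph $F$ is $q$-cut-dense if for every partition $V(F)=A\cup B$ into disjoint sets, the number of edges of $F$ between $A$ and $B$ is at least $q|A||B|$. *)

From HB Require Import structures.
From mathcomp Require Import all_boot all_order all_algebra.
Set Implicit Arguments. Unset Strict Implicit. Unset Printing Implicit Defensive.
Import Order.TTheory GRing.Theory Num.Theory.

(* A simple graph on vertex set T is a symmetric irreflexive relation e : rel T. *)

Definition edges (T : finType) (e : rel T) : {set {set T}} :=
  [set E : {set T} | [exists x, exists y, e x y && (E == [set x; y])]].

Definition e_between (T : finType) (h : rel T) (A B : {set T}) : nat :=
  #|[set p : T * T | [&& p.1 \in A, p.2 \in B & h p.1 p.2]]|.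

Definition component (T : finType) (h : rel T) (x : T) : {set T} :=
  [set y | connect h x y].

Definition cut_dense (R : numDomainType) (T : finType) (h : rel T)
    (C : {set T}) (q : R) : Prop :=
  forall A : {set T}, A \subset C ->
    (q * #|A|%:R * #|C :\: A|%:R <= (e_between h A (C :\: A))%:R)%R.

From HB Require Import structures.
From mathcomp Require Import all_boot all_order all_algebra.
Set Implicit Arguments.
Unset Strict Implicit.
Unset Printing Implicit Defensive.
Import Order.TTheory GRing.Theory Num.Theory.
Local Open Scope ring_scope.

(* Call a symmetric subgraph h of e within budget when the number of edges of
   e missing from h is at most q times the number of ordered pairs of vertices
   that are disconnected in h; e itself is. If a component C of h has a cut
   (A, C \ A) crossed by fewer than q |A| |C \ A| edges, deleting these edges
   keeps h within budget, because it disconnects all |A| |C \ A| pairs of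
   A x (C \ A). The number of disconnected pairs strictly increases, so the
   process stops at a subgraph all of whose components are q-cut-dense, and
   since at most n^2 pairs are disconnected, at most q n^2 edges were deleted. *)

Section CutRel.
Variables (T : finType) (h : rel T) (A B : {set T}).

Definition crossing (u v : T) : bool :=
  ((u \in A) && (v \in B)) || ((u \in B) && (v \in A)).

Definition cut_rel : rel T := fun u v => h u v && ~~ crossing u v.

Lemma cut_rel_sub : subrel cut_rel h.
Proof. by move=> u v /andP[]. Qed.

Lemma crossingC u v : crossing u v = crossing v u.
Proof. by rewrite /crossing orbC; congr (_ || _); rewrite andbC. Qed.

Lemma cut_rel_sym : symmetric h -> symmetric cut_rel.
Proof. by move=> hsym u v; rewrite /cut_rel hsym crossingC. Qed.

Lemma card_removed_cut_rel (e : rel T) : symmetric h ->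
  (#|edges e :\: edges cut_rel| <= #|edges e :\: edges h| + e_between h A B)%N.
Proof.
move=> hsym; set X := [set p : T * T | [&& p.1 \in A, p.2 \in B & h p.1 p.2]].
have sub : edges e :\: edges cut_rel \subset
           (edges e :\: edges h) :|: [set [set p.1; p.2] | p in X].
  apply/subsetP => E; rewrite in_setD in_setU in_setD => /andP[nE eE].
  rewrite eE andbT; case/boolP: (E \in edges h) => //=.
  rewrite inE => /existsP[u /existsP[v /andP[huv /eqP defE]]].
  have : crossing u v.
    apply: contraNT nE => ncr; rewrite inE; apply/existsP; exists u.
    by apply/existsP; exists v; rewrite /cut_rel huv ncr defE eqxx.
  case/orP => [/andP[uA vB] | /andP[uB vA]].
  - by apply/imsetP; exists (u, v); rewrite // inE /= uA vB huv.
  - apply/imsetP; exists (v, u); first by rewrite inE /= vA uB hsym huv.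
    by rewrite defE setUC.
apply: leq_trans (subset_leq_card sub) _.
apply: leq_trans (leq_card_setU _ _) _.
by rewrite leq_add2l leq_imset_card.
Qed.

End CutRel.

Definition disconnected_pairs (T : finType) (h : rel T) : {set T * T} :=
  [set p | ~~ connect h p.1 p.2].

Lemma disconnected_pairsS (T : finType) (g h : rel T) :
  subrel g h -> disconnected_pairs h \subset disconnected_pairs g.
Proof.
move=> sgh; apply/subsetP => -[u v]; rewrite !inE /=; apply: contra.
by apply: connect_sub => a b /sgh /connect1.
Qed.

Section CutComponent.
Variables (T : finType) (h : rel T) (x : T) (A : {set T}).
Hypotheses (hsym : symmetric h) (sAC : A \subset component h x).

Let C := component h x.
Let h' := cut_rel h A (C :\: A).

Lemma connect_component u v : u \in C -> v \in C -> connect h u v.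
Proof.
rewrite !inE => xu xv; apply: connect_trans xv.
by rewrite (sym_connect_sym hsym).
Qed.

Lemma closed_cut_component : closed h' A.
Proof.
apply: intro_closed; first exact/sym_connect_sym/cut_rel_sym.
move=> u v /andP[huv ncr] uA; apply: contraNT ncr => vA.
have := subsetP sAC _ uA; rewrite /crossing uA in_setD vA /C !inE => xu.
by rewrite (connect_trans xu (connect1 huv)).
Qed.

Lemma card_disconnected_cut_component :
  (#|disconnected_pairs h| + #|A| * #|C :\: A| <= #|disconnected_pairs h'|)%N.
Proof.
have dis : [disjoint disconnected_pairs h & setX A (C :\: A)].
  rewrite -setI_eq0; apply/eqP/setP => -[u v]; rewrite !inE /=.
  apply/negbTE/negP => /and3P[/negP nuv uA /andP[_ vC]].
  by apply: nuv; apply: connect_component (subsetP sAC _ uA) _; rewrite /C inE.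
have sub : disconnected_pairs h :|: setX A (C :\: A) \subset disconnected_pairs h'.
  rewrite subUset (disconnected_pairsS (@cut_rel_sub _ _ _ _)) /=.
  apply/subsetP => -[u v]; rewrite !inE /= => /andP[uA /andP[vA _]].
  apply: contraNN vA => /(closed_connect closed_cut_component).
  by rewrite uA => <-.
rewrite -cardsX; move: dis; rewrite -(leq_card_setU _ _).2 => /eqP <-.
exact: subset_leq_card.
Qed.

End CutComponent.

Section SparseCutRemoval.
Variables (R : realDomainType) (T : finType) (e : rel T) (q : R).
Hypothesis q_ge0 : 0 <= q.

Definition within_budget (h : rel T) : Prop :=
  [/\ symmetric h, subrel h e &
      #|edges e :\: edges h|%:R <= q * #|disconnected_pairs h|%:R].

Lemma remove_sparse_cut h x (A : {set T}) (C := component h x) :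
  within_budget h -> A \subset C ->
  ~~ (q * #|A|%:R * #|C :\: A|%:R <= (e_between h A (C :\: A))%:R) ->
  within_budget (cut_rel h A (C :\: A)) /\
  (#|disconnected_pairs h| < #|disconnected_pairs (cut_rel h A (C :\: A))|)%N.
Proof.
move=> [hsym she budget] sAC; rewrite -ltNge => sparse.
have gain := card_disconnected_cut_component hsym sAC.
have cut_nonempty : (0 < #|A| * #|C :\: A|)%N.
  rewrite lt0n; apply: contraTneq sparse => empty_cut.
  by rewrite -mulrA -natrM empty_cut mulr0 -leNgt ler0n.
split; last by apply: leq_trans gain; rewrite -addn1 leq_add2l.
split; [exact: cut_rel_sym | by move=> u v /cut_rel_sub /she |].
apply: le_trans (_ : _ <= (#|edges e :\: edges h| + e_between h A (C :\: A))%:R) _.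
  by rewrite ler_nat card_removed_cut_rel.
rewrite natrD; apply: le_trans (lerD budget (ltW sparse)) _.
by rewrite -mulrA -mulrDr ler_wpM2l // -natrM -natrD ler_nat.
Qed.

Lemma within_budget_cut_dense h : within_budget h ->
  exists g, within_budget g /\ forall x, cut_dense g (component g x) q.
Proof.
have [n] := ubnP #|~: disconnected_pairs h|; elim: n h => // n IHn h.
rewrite ltnS => connected_le h_ok.
case: (pickP (fun xA : T * {set T} =>
    (xA.2 \subset component h xA.1) &&
    ~~ (q * #|xA.2|%:R * #|component h xA.1 :\: xA.2|%:R
        <= (e_between h xA.2 (component h xA.1 :\: xA.2))%:R)))
  => [[x A] /andP[/= sAC sparse] | dense].
- have [g_ok more] := remove_sparse_cut h_ok sAC sparse.
  apply: IHn g_ok; apply: leq_trans connected_le.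
  set g := cut_rel _ _ _ in more *.
  rewrite -(ltn_add2l #|disconnected_pairs g|) cardsC.
  by rewrite -(cardsC (disconnected_pairs h)) ltn_add2r.
- exists h; split => // x A sAC.
  by have := dense (x, A); rewrite /= sAC => /negbFE.
Qed.

End SparseCutRemoval.

Theorem lemma3p13 (R : realFieldType) (T : finType) (e : rel T)
    (e_sym : symmetric e) (e_irr : irreflexive e) (q : R) (hq : 0 < q) :
  exists h : rel T,
    [/\ symmetric h,
        (forall x y, h x y -> e x y),
        (#|edges e :\: edges h|%:R <= q * (#|T|%:R) ^+ 2)
      & forall x : T, cut_dense h (component h x) q].
Proof.
have e_ok : within_budget e q e.
  by split => //; rewrite setDv cards0 mulr_ge0 // ltW.
have [h [[h_sym h_sub budget] dense]] := within_budget_cut_dense (ltW hq) e_ok.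
exists h; split => //; apply: le_trans budget _.
by rewrite ler_pM2l // expr2 -natrM ler_nat -card_prod max_card.
Qed.
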